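(* Let $\alpha>2$, let $K>0$ be a constant not depending on $\beta$, and let $\beta_{\min}>0$. Consider maximizing over $\beta\ge\beta_{\min}$ the (reduced) area spectral efficiency $$\mathcal{A}(\beta)=\ln(1+\beta)\,\beta^{-2/\alpha}\exp\left(-K\beta^{2/\alpha}\right).$$ Then the optimal decoding target is $\beta^*=\max(\beta_0,\beta_{\min})$, where $\beta_0>0$ satisfies $$-2K\beta_0^{2/\alpha}\ln(1+\beta_0)+\frac{\alpha\beta_0}{1+\beta_0}-2\ln(1+\beta_0)=0.$$
   Context: In the paper, $K=\int_{[s-d]^+}^{\infty}c_0(y,s)\,dy$, where $d$ is the secondary TX–RX distance, $s>0$ is a constant (arising from a mean-value decomposition of the ASE integral) treated as independent of $\beta$, and $c_0(y,s)=\frac{2\lambda_1P_1d^{\alpha}y^{-\alpha+1}}{P_2+P_1d^{\alpha}y^{-\alpha}}\arccos\left(\frac{s^2-d^2-y^2}{2dy}\right)$ if $|s-d|<y\le s+d$ and $c_0(y,s)=\frac{2\pi\lambda_1P_1d^{\alpha}y^{-\alpha+1}}{P_2+P_1d^{\alpha}y^{-\alpha}}$ otherwise ($\lambda_1$ primary density, $P_1,P_2$ transmit powers). $\beta_{\min}$ is the minimum decoding target guaranteeing primary protection. The function $\mathcal{A}$ is the secondary area spectral efficiency after removing factors independent of $\beta$. *)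

From Stdlib Require Import Reals.
Open Scope R_scope.

Definition ASE (alpha K beta : R) : R :=
  ln (1 + beta) * Rpower beta (- (2 / alpha)) * exp (- K * Rpower beta (2 / alpha)).

Definition beta0_eq (alpha K b : R) : Prop :=
  - 2 * K * Rpower b (2 / alpha) * ln (1 + b) + alpha * b / (1 + b)
    - 2 * ln (1 + b) = 0.

From Stdlib Require Import Reals Lra.
From Coquelicot Require Import Coquelicot.
Open Scope R_scope.

(* The logarithmic derivative of ASE is the score below divided by alpha * beta.
   The score is strictly decreasing: its first term is alpha over the increasing
   function (1 + x) ln (1 + x) / x and its last term grows like x^(2/alpha).
   It is positive near 0 (its limit there is alpha - 2 > 0) and negative for
   large x, so it has a root beta0, which is unique; ASE increases up to beta0
   and decreases after it, and its maximum over [beta_min, oo) is attained at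
   max(beta0, beta_min). *)

Lemma ln_1p_pos (x : R) : 0 < x -> 0 < ln (1 + x).
Proof. intros Hx; rewrite <- ln_1; apply ln_increasing; lra. Qed.

Lemma ln_1p_lt (x : R) : 0 < x -> ln (1 + x) < x.
Proof.
  intros Hx; rewrite <- (ln_exp x) at 2.
  apply ln_increasing; [lra |].
  apply exp_ineq1; lra.
Qed.

Lemma derive_nonneg_le (f df : R -> R) (a b : R) :
  a <= b ->
  (forall x, a <= x <= b -> is_derive f x (df x)) ->
  (forall x, a < x < b -> 0 <= df x) ->
  f a <= f b.
Proof.
  intros Hab Hf Hdf.
  destruct (Req_dec a b) as [<- | Hne]; [lra |].
  destruct (MVT_cor2 f df a b) as [c [Hc Hac]]; [lra | |].
  - intros c Hc; apply is_derive_Reals, Hf; lra.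
  - pose proof (Hdf c Hac); nra.
Qed.

Lemma derive_nonpos_le (f df : R -> R) (a b : R) :
  a <= b ->
  (forall x, a <= x <= b -> is_derive f x (df x)) ->
  (forall x, a < x < b -> df x <= 0) ->
  f b <= f a.
Proof.
  intros Hab Hf Hdf.
  enough (- f a <= - f b) by lra.
  apply (derive_nonneg_le (fun x => - f x) (fun x => - df x)); [lra | |].
  - intros x Hx; exact (is_derive_opp f x (df x) (Hf x Hx)).
  - intros x Hx; specialize (Hdf x Hx); lra.
Qed.

Lemma unimodal_le_Rmax (f : R -> R) (m lo : R) :
  (forall a b, lo <= a <= b -> b <= m -> f a <= f b) ->
  (forall a b, m <= a <= b -> f b <= f a) ->
  forall x, lo <= x -> f x <= f (Rmax m lo).
Proof.
  intros Hup Hdown x Hx.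
  destruct (Rle_dec m lo) as [Hm | Hm].
  - rewrite Rmax_right by lra; apply Hdown; lra.
  - rewrite Rmax_left by lra.
    destruct (Rle_dec x m); [apply Hup | apply Hdown]; lra.
Qed.

Definition ln_1p_growth (x : R) : R := (1 + x) * ln (1 + x) / x.

Lemma ln_1p_growth_pos (x : R) : 0 < x -> 0 < ln_1p_growth x.
Proof.
  intros Hx; pose proof (ln_1p_pos x Hx).
  apply Rdiv_lt_0_compat; nra.
Qed.

Lemma ln_1p_growth_increasing (x y : R) :
  0 < x -> x < y -> ln_1p_growth x < ln_1p_growth y.
Proof.
  intros Hx Hxy.
  apply (incr_function ln_1p_growth (Finite 0) p_infty
           (fun z => (z - ln (1 + z)) / (z * z))); simpl; try lra.
  - intros z Hz _; unfold ln_1p_growth; auto_derive.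
    + repeat split; lra.
    + field; lra.
  - intros z Hz _; pose proof (ln_1p_lt z Hz).
    apply Rdiv_lt_0_compat; nra.
Qed.

Definition ase_score (alpha K x : R) : R :=
  alpha * x / ((1 + x) * ln (1 + x)) - 2 - 2 * K * Rpower x (2 / alpha).

Lemma beta0_eq_score (alpha K b : R) :
  0 < b -> beta0_eq alpha K b <-> ase_score alpha K b = 0.
Proof.
  intros Hb; pose proof (ln_1p_pos b Hb).
  assert (E : - 2 * K * Rpower b (2 / alpha) * ln (1 + b) + alpha * b / (1 + b)
                - 2 * ln (1 + b) = ln (1 + b) * ase_score alpha K b)
    by (unfold ase_score; field; lra).
  unfold beta0_eq; rewrite E; split; intros H'.
  - destruct (Rmult_integral _ _ H'); [lra | assumption].
  - rewrite H'; ring.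
Qed.

Lemma ase_score_decreasing (alpha K x y : R) :
  0 < alpha -> 0 <= K -> 0 < x -> x < y ->
  ase_score alpha K y < ase_score alpha K x.
Proof.
  intros Ha HK Hx Hxy.
  assert (E : forall z, 0 < z ->
             alpha * z / ((1 + z) * ln (1 + z)) = alpha / ln_1p_growth z).
  { intros z Hz; pose proof (ln_1p_pos z Hz).
    unfold ln_1p_growth; field; repeat split; lra. }
  unfold ase_score; rewrite !E by lra.
  pose proof (ln_1p_growth_pos x Hx).
  pose proof (ln_1p_growth_increasing x y Hx Hxy).
  assert (alpha / ln_1p_growth y < alpha / ln_1p_growth x).
  { apply Rmult_lt_compat_l; [lra |].
    apply Rinv_lt_contravar; nra. }
  assert (Rpower x (2 / alpha) < Rpower y (2 / alpha)).
  { apply Rlt_Rpower_l; [apply Rdiv_lt_0_compat |]; lra. }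
  nra.
Qed.

Lemma ase_score_continuous (alpha K x : R) :
  0 < x -> continuity_pt (ase_score alpha K) x.
Proof.
  intros Hx; pose proof (ln_1p_pos x Hx).
  apply derivable_continuous_pt.
  exists (Derive (ase_score alpha K) x).
  apply is_derive_Reals, Derive_correct.
  unfold ase_score, Rpower; auto_derive.
  repeat split; try lra; apply Rgt_not_eq; nra.
Qed.

Lemma ase_score_lower_bound (alpha K x : R) :
  0 < alpha -> 0 < x ->
  alpha / (1 + x) - 2 - 2 * K * Rpower x (2 / alpha) <= ase_score alpha K x.
Proof.
  intros Ha Hx; pose proof (ln_1p_pos x Hx); pose proof (ln_1p_lt x Hx).
  enough (alpha / (1 + x) <= alpha * x / ((1 + x) * ln (1 + x)))
    by (unfold ase_score; lra).
  replace (alpha * x / ((1 + x) * ln (1 + x)))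
    with (alpha / (1 + x) * (x / ln (1 + x))) by (field; lra).
  assert (1 < x / ln (1 + x)).
  { apply Rmult_lt_reg_r with (ln (1 + x)); [lra |].
    unfold Rdiv; rewrite Rmult_assoc, Rinv_l; lra. }
  assert (0 < alpha / (1 + x)) by (apply Rdiv_lt_0_compat; lra).
  nra.
Qed.

(* At x = s^(alpha/2) we have x <= s and x^(2/alpha) = s, so the lower bound
   alpha / (1 + s) - 2 - 2 K s is positive for s small. *)
Lemma ase_score_pos_near_0 (alpha K : R) :
  2 < alpha -> 0 <= K -> exists x, 0 < x /\ 0 < ase_score alpha K x.
Proof.
  intros Ha HK.
  set (s := (alpha - 2) / (2 * (alpha + 2 * K))).
  assert (Hs0 : 0 < s) by (apply Rdiv_lt_0_compat; lra).
  assert (Hs1 : s < 1).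
  { apply Rmult_lt_reg_r with (2 * (alpha + 2 * K)); [lra |].
    unfold s; field_simplify; lra. }
  assert (Hs2 : s * (2 + 4 * K) < alpha - 2).
  { apply Rmult_lt_reg_r with (2 * (alpha + 2 * K)); [lra |].
    unfold s; field_simplify; nra. }
  set (x := Rpower s (alpha / 2)).
  assert (Hx0 : 0 < x) by apply exp_pos.
  assert (Hxs : x <= s).
  { assert (ln s < 0) by (rewrite <- ln_1; apply ln_increasing; lra).
    unfold x, Rpower; rewrite <- (exp_ln s) at 2 by lra.
    apply Rlt_le, exp_increasing; nra. }
  assert (Hxpow : Rpower x (2 / alpha) = s).
  { unfold x; rewrite Rpower_mult.
    replace (alpha / 2 * (2 / alpha)) with 1 by (field; lra).
    apply Rpower_1; lra. }
  exists x; split; [assumption |].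
  apply Rlt_le_trans with (2 := ase_score_lower_bound alpha K x ltac:(lra) Hx0).
  rewrite Hxpow.
  assert (alpha / (1 + s) <= alpha / (1 + x)).
  { apply Rmult_le_compat_l; [lra |]; apply Rinv_le_contravar; lra. }
  enough (2 + 2 * K * s < alpha / (1 + s)) by lra.
  apply Rmult_lt_reg_r with (1 + s); [lra |].
  replace (alpha / (1 + s) * (1 + s)) with alpha by (field; lra).
  assert (K * s * s <= K * s) by (rewrite Rmult_assoc; apply Rmult_le_compat_l; nra).
  nra.
Qed.

(* At x = e^alpha - 1 the first term of the score is x / (1 + x) < 1. *)
Lemma ase_score_neg_far (alpha K : R) :
  0 < alpha -> 0 <= K -> ase_score alpha K (exp alpha - 1) < 0.
Proof.
  intros Ha HK; unfold ase_score.
  replace (1 + (exp alpha - 1)) with (exp alpha) by ring.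
  rewrite ln_exp.
  pose proof (exp_pos alpha); pose proof (exp_pos (2 / alpha * ln (exp alpha - 1))).
  replace (alpha * (exp alpha - 1) / (exp alpha * alpha))
    with (1 - / exp alpha) by (field; lra).
  pose proof (Rinv_0_lt_compat _ (exp_pos alpha)).
  unfold Rpower; nra.
Qed.

Lemma ase_score_root_exists (alpha K : R) :
  2 < alpha -> 0 <= K -> exists b, 0 < b /\ ase_score alpha K b = 0.
Proof.
  intros Ha HK.
  destruct (ase_score_pos_near_0 alpha K Ha HK) as [x [Hx Hpos]].
  set (y := exp alpha - 1).
  assert (Hneg : ase_score alpha K y < 0) by (apply ase_score_neg_far; lra).
  assert (Hxy : x < y).
  { apply Rnot_le_lt; intros Hyx.
    destruct (Req_dec y x) as [-> | Hne]; [lra |].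
    assert (0 < y) by (pose proof (exp_ineq1 alpha); unfold y; lra).
    pose proof (ase_score_decreasing alpha K y x ltac:(lra) HK); lra. }
  destruct (Ranalysis5.IVT_interv (fun z => - ase_score alpha K z) x y)
    as [z [Hz Hroot]]; [| lra | lra | lra |].
  - intros a Haxy; apply continuity_pt_opp, ase_score_continuous; lra.
  - exists z; split; lra.
Qed.

Lemma ASE_pos (alpha K x : R) : 0 < x -> 0 < ASE alpha K x.
Proof.
  intros Hx; unfold ASE.
  apply Rmult_lt_0_compat; [apply Rmult_lt_0_compat |];
    [apply ln_1p_pos; lra | apply exp_pos | apply exp_pos].
Qed.

Lemma is_derive_ASE (alpha K x : R) :
  0 < alpha -> 0 < x ->
  is_derive (ASE alpha K) x (ASE alpha K x / (alpha * x) * ase_score alpha K x).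
Proof.
  intros Ha Hx; pose proof (ln_1p_pos x Hx).
  unfold ASE, ase_score, Rpower; auto_derive.
  - repeat split; lra.
  - field; repeat split; lra.
Qed.

Section Around_root.

Variables alpha K beta0 : R.
Hypothesis alpha_pos : 0 < alpha.
Hypothesis K_nonneg : 0 <= K.
Hypothesis beta0_pos : 0 < beta0.
Hypothesis beta0_root : ase_score alpha K beta0 = 0.

Lemma ASE_nondecreasing_below_root (a b : R) :
  0 < a -> a <= b -> b <= beta0 -> ASE alpha K a <= ASE alpha K b.
Proof.
  intros Ha Hab Hb.
  apply (derive_nonneg_le _ (fun x => ASE alpha K x / (alpha * x) * ase_score alpha K x));
    [assumption | intros x Hx; apply is_derive_ASE; lra |].
  intros x Hx.
  pose proof (ASE_pos alpha K x ltac:(lra)).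
  pose proof (ase_score_decreasing alpha K x beta0 alpha_pos K_nonneg ltac:(lra) ltac:(lra)).
  apply Rmult_le_pos; [apply Rlt_le, Rdiv_lt_0_compat; nra | lra].
Qed.

Lemma ASE_nonincreasing_above_root (a b : R) :
  beta0 <= a -> a <= b -> ASE alpha K b <= ASE alpha K a.
Proof.
  intros Ha Hab.
  apply (derive_nonpos_le _ (fun x => ASE alpha K x / (alpha * x) * ase_score alpha K x));
    [assumption | intros x Hx; apply is_derive_ASE; lra |].
  intros x Hx.
  pose proof (ASE_pos alpha K x ltac:(lra)).
  pose proof (ase_score_decreasing alpha K beta0 x alpha_pos K_nonneg beta0_pos ltac:(lra)).
  assert (0 < ASE alpha K x / (alpha * x)) by (apply Rdiv_lt_0_compat; nra).
  nra.
Qed.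

End Around_root.

Theorem proposition3 (alpha K beta_min : R) :
  2 < alpha -> 0 < K -> 0 < beta_min ->
  (exists beta0 : R, 0 < beta0 /\ beta0_eq alpha K beta0) /\
  (forall beta0 : R, 0 < beta0 -> beta0_eq alpha K beta0 ->
     beta_min <= Rmax beta0 beta_min /\
     forall beta : R, beta_min <= beta ->
       ASE alpha K beta <= ASE alpha K (Rmax beta0 beta_min)).
Proof.
  intros Ha HK Hmin; split.
  - destruct (ase_score_root_exists alpha K Ha ltac:(lra)) as [b [Hb Hroot]].
    exists b; split; [assumption |].
    apply beta0_eq_score; assumption.
  - intros beta0 Hb0 Heq.
    apply beta0_eq_score in Heq; [| assumption].
    split; [apply Rmax_r |].
    apply unimodal_le_Rmax.
    + intros a b Hab Hb; apply (ASE_nondecreasing_below_root alpha K beta0); lra.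
    + intros a b Hab; apply (ASE_nonincreasing_above_root alpha K beta0); lra.
Qed.
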